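(* Let $V\in\mathcal{R}$. For every generating sequence $(u_m)$ of $V$, the sequence $(\rho_{u_m})$ is nondecreasing, so $\lim_{m\to\infty}\rho_{u_m}$ exists in $[0,+\infty]$; moreover this limit is the same for all generating sequences of $V$ (in particular it equals $\lim_n\rho_{v_n}$ for the canonical generating sequence $(v_n)$ of $V$).
   Context: $\mathcal{F}$ is the set of finite words over $\{0,1\}$ that start and end with $0$. For a finite word $\alpha$, $Y(\alpha)$, $Z(\alpha)$ are the numbers of $1$s and $0$s in $\alpha$ and $\rho_\alpha=Y(\alpha)/Z(\alpha)$. For $u,v\in\mathcal{F}$, $u$ is built from $v$ if $u=v1^{a_1}v\cdots v1^{a_{q-1}}v$ for some $q\ge2$ and nonnegative integers $a_i$; it is built simply from $v$ if moreover $a_1=\dots=a_{q-1}$. A generating sequence is a sequence $(v_n)$ in $\mathcal{F}$ with $v_0=0$ and each $v_{n+1}$ built from $v_n$. An infinite word $V\in\{0,1\}^{\mathbb{N}}$ is a rank one word if there is a generating sequence $(v_n)$ with $V\upharpoonright\mathrm{lh}(v_n)=v_n$ for all $n$; $\mathcal{R}$ is the set of rank one words that are aperiodic (nondegenerate). $V$ is built from $v\in\mathcal{F}$ if $V=v1^{a_1}v1^{a_2}v\cdots$ for nonnegative integers $a_i$. An element $v\in\mathcal{F}$ belongs to the canonical generating sequence of $V$ if $V$ is built from $v$ and there are no $u,w\in\mathcal{F}$ with $\mathrm{lh}(u)<\mathrm{lh}(v)<\mathrm{lh}(w)$, $V$ built from both $u$ and $w$, $w$ built from $u$, $u$ built from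 $v$, and $w$ built simply from $u$; these elements, listed by increasing length, form a generating sequence of $V$ (the canonical generating sequence). *)

From Stdlib Require Import Reals List Arith.
Import ListNotations.
Open Scope R_scope.

(* Finite words over {0,1}: list bool, with false = 0 and true = 1. *)
Definition word := list bool.

Definition Y (a : word) : nat := length (filter (fun b => b) a).
Definition Z (a : word) : nat := length (filter negb a).

Definition rho (a : word) : R := INR (Y a) / INR (Z a).

Definition inF (a : word) : Prop :=
  a <> [] /\ hd true a = false /\ last a true = false.

(* u is built from v: u = v 1^{a_1} v ... v 1^{a_{q-1}} v with q >= 2;
   the list as = [a_1; ...; a_{q-1}] is nonempty. *)
Definition built_from (u v : word) : Prop :=
  exists as_ : list nat, as_ <> [] /\
    u = v ++ concat (map (fun a => repeat true a ++ v) as_).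

Definition generating_sequence (v : nat -> word) : Prop :=
  (forall n, inF (v n)) /\ v 0%nat = [false] /\
  (forall n, built_from (v (S n)) (v n)).

Definition infword := nat -> bool.

Definition is_prefix (w : word) (V : infword) : Prop :=
  forall i, (i < length w)%nat -> nth i w false = V i.

Definition gen_seq_of (V : infword) (v : nat -> word) : Prop :=
  generating_sequence v /\ forall n, is_prefix (v n) V.

Definition rank_one (V : infword) : Prop := exists v, gen_seq_of V v.

Definition aperiodic (V : infword) : Prop :=
  ~ exists p : nat, (0 < p)%nat /\ forall i, V (i + p)%nat = V i.

Definition in_calR (V : infword) : Prop := rank_one V /\ aperiodic V.

(* Convergence to a limit in [0,+oo]: None stands for +oo. *)
Definition cv_ext (u : nat -> R) (L : option R) : Prop :=
  match L with
  | Some l => Un_cv u l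
  | None => cv_infty u
  end.

(* For a generating sequence (u_m) of V every u_{m+1} is built from u_m;
   such a word has at least twice as many 0s and a ratio of 1s to 0s at
   least as large, so (rho_{u_m}) is nondecreasing and Z(u_m) >= m+1.
   Iterating "built from", u_n is w ++ (1^a w)(1^b w)... for w = u_k with
   k <= n: a concatenation of copies of w separated by runs of 1s.  Any
   prefix p of such a word satisfies
       Y(w) Z(p) <= Z(w) Y(p) + Y(w) Z(w),
   i.e. rho_p >= rho_w - Y(w)/Z(p): only the last, partial copy of w can
   lower the ratio.  If (u_m) and (w_m) are two generating sequences of V,
   every u_n is a prefix of some w_m, so rho_{u_n} eventually exceeds
   rho_{w_k} - eps, and symmetrically.  Two nondecreasing sequences that
   eventually dominate each other up to eps have the same limit in
   [0,+oo]; the existence of that limit is monotone convergence. *)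
From Pilot Require Import Defs.
From Stdlib Require Import Reals List Arith.
From Stdlib Require Import Lia Lra Classical.
Import ListNotations Defs.
Open Scope R_scope.

Lemma Y_app (a b : word) : Y (a ++ b) = (Y a + Y b)%nat.
Proof. unfold Y. rewrite filter_app, length_app. reflexivity. Qed.

Lemma Z_app (a b : word) : Z (a ++ b) = (Z a + Z b)%nat.
Proof. unfold Z. rewrite filter_app, length_app. reflexivity. Qed.

Lemma Y_repeat_true (a : nat) : Y (repeat true a) = a.
Proof. induction a as [|a IH]; unfold Y in *; simpl; lia. Qed.

Lemma Z_repeat_true (a : nat) : Z (repeat true a) = 0%nat.
Proof. induction a; simpl; auto. Qed.

Lemma Z_le_length (l : word) : (Z l <= length l)%nat.
Proof. induction l as [|[] l IH]; unfold Z in *; simpl; lia. Qed.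

Lemma Z_firstn (k : nat) (l : word) : (Z (firstn k l) <= Z l)%nat.
Proof. rewrite <- (firstn_skipn k l) at 2. rewrite Z_app. lia. Qed.

Definition blocks (w : word) (as_ : list nat) : word :=
  concat (map (fun a => repeat true a ++ w) as_).

Lemma blocks_cons (w : word) (a : nat) (l : list nat) :
  blocks w (a :: l) = (repeat true a ++ w) ++ blocks w l.
Proof. reflexivity. Qed.

Lemma blocks_app (w : word) (l1 l2 : list nat) :
  blocks w (l1 ++ l2) = blocks w l1 ++ blocks w l2.
Proof. unfold blocks. rewrite map_app, concat_app. reflexivity. Qed.

Lemma Y_blocks (w : word) (as_ : list nat) :
  Y (blocks w as_) = (length as_ * Y w + list_sum as_)%nat.
Proof.
  induction as_ as [|a l IH]; simpl; auto.
  rewrite blocks_cons, !Y_app, Y_repeat_true, IH. lia.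
Qed.

Lemma Z_blocks (w : word) (as_ : list nat) :
  Z (blocks w as_) = (length as_ * Z w)%nat.
Proof.
  induction as_ as [|a l IH]; simpl; auto.
  rewrite blocks_cons, !Z_app, Z_repeat_true, IH. lia.
Qed.

(* Blocks of a word that is itself w followed by blocks of w are blocks of w:
   this is what makes "built from" transitive. *)
Lemma blocks_of_blocks (w : word) (bs as_ : list nat) :
  blocks (w ++ blocks w bs) as_ = blocks w (concat (map (fun a => a :: bs) as_)).
Proof.
  induction as_ as [|a l IH]; simpl; auto.
  rewrite !blocks_cons, blocks_app, IH, !app_assoc. reflexivity.
Qed.

(* x is w followed by zero or more blocks of w: the reflexive-transitive
   closure of "built from". *)
Definition made_of (w x : word) : Prop := exists as_, x = w ++ blocks w as_.

Lemma made_of_refl (w : word) : made_of w w.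
Proof. exists []. simpl. now rewrite app_nil_r. Qed.

Lemma made_of_built_from (w y x : word) :
  made_of w y -> built_from x y -> made_of w x.
Proof.
  intros [bs ->] [as_ [_ ->]].
  exists (bs ++ concat (map (fun a => a :: bs) as_)).
  fold (blocks (w ++ blocks w bs) as_).
  rewrite blocks_of_blocks, blocks_app, app_assoc. reflexivity.
Qed.

Lemma built_from_counts (x y : word) : built_from x y ->
  (2 * Z y <= Z x)%nat /\ (Z x * Y y <= Y x * Z y)%nat.
Proof.
  intros [as_ [Hne ->]]. fold (blocks y as_).
  rewrite Y_app, Z_app, Y_blocks, Z_blocks.
  destruct as_ as [|a l]; [congruence|]. simpl length. split; nia.
Qed.

(* The prefix bound: a prefix p of w (1^{a_1} w)... satisfies
   Y(w) Z(p) <= Z(w) Y(p) + Y(w) Z(w); every complete copy of w carries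
   ratio rho_w, the runs of 1s only help, the partial copy costs Y(w) Z(w). *)
Lemma prefix_made_of_bound (w : word) (as_ : list nat) (N : nat) :
  let p := firstn N (w ++ blocks w as_) in
  (Y w * Z p <= Z w * Y p + Y w * Z w)%nat.
Proof.
  simpl. revert N; induction as_ as [|a l IH]; intros N.
  - simpl. rewrite app_nil_r. pose proof (Z_firstn N w). nia.
  - assert (E : w ++ blocks w (a :: l) = w ++ repeat true a ++ (w ++ blocks w l)).
    { rewrite blocks_cons, !app_assoc. reflexivity. }
    rewrite E. revert IH. generalize (w ++ blocks w l). intros r IH.
    rewrite !firstn_app, repeat_length.
    destruct (le_lt_dec N (length w)) as [Hle|Hlt].
    + replace (N - length w)%nat with 0%nat by lia. simpl.
      rewrite !app_nil_r. pose proof (Z_firstn N w). nia.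
    + rewrite (firstn_all2 w) by lia.
      specialize (IH (N - length w - a)%nat).
      rewrite !Y_app, !Z_app.
      pose proof (Z_firstn (N - length w) (repeat true a)) as Hrun.
      rewrite Z_repeat_true in Hrun. nia.
Qed.

Lemma prefix_of_prefix (V : infword) (w x : word) :
  is_prefix w V -> is_prefix x V -> (length w <= length x)%nat ->
  w = firstn (length w) x.
Proof.
  intros Hw Hx Hl. apply nth_ext with (d := false) (d' := false).
  - rewrite length_firstn. lia.
  - intros i Hi. rewrite nth_firstn.
    replace (i <? length w)%nat with true by (symmetry; apply Nat.ltb_lt; lia).
    rewrite Hw, Hx; auto; lia.
Qed.

Lemma rho_nonneg (x : word) : 0 <= rho x.
Proof.
  unfold rho, Rdiv. destruct (Req_dec (INR (Z x)) 0) as [E|E].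
  - rewrite E, Rinv_0. lra.
  - apply Rmult_le_pos; [apply pos_INR|]. left. apply Rinv_0_lt_compat.
    pose proof (pos_INR (Z x)). lra.
Qed.

Lemma rho_le_cross (a b : word) : (0 < Z a)%nat -> (0 < Z b)%nat ->
  (Z b * Y a <= Y b * Z a)%nat -> rho a <= rho b.
Proof.
  intros Ha Hb H. apply lt_0_INR in Ha, Hb. apply le_INR in H.
  rewrite !mult_INR in H. unfold rho.
  apply Rmult_le_reg_r with (INR (Z a) * INR (Z b)); [nra|].
  replace (INR (Y a) / INR (Z a) * (INR (Z a) * INR (Z b)))
    with (INR (Z b) * INR (Y a)) by (field; lra).
  replace (INR (Y b) / INR (Z b) * (INR (Z a) * INR (Z b)))
    with (INR (Y b) * INR (Z a)) by (field; lra).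
  exact H.
Qed.

Lemma rho_lower_bound (w p : word) : (0 < Z w)%nat -> (0 < Z p)%nat ->
  (Y w * Z p <= Z w * Y p + Y w * Z w)%nat ->
  rho w - INR (Y w) / INR (Z p) <= rho p.
Proof.
  intros Hw Hp H. apply lt_0_INR in Hw, Hp. apply le_INR in H.
  rewrite plus_INR, !mult_INR in H. unfold rho.
  apply Rmult_le_reg_r with (INR (Z w) * INR (Z p)); [nra|].
  replace ((INR (Y w) / INR (Z w) - INR (Y w) / INR (Z p)) * (INR (Z w) * INR (Z p)))
    with (INR (Y w) * INR (Z p) - INR (Y w) * INR (Z w)) by (field; lra).
  replace (INR (Y p) / INR (Z p) * (INR (Z w) * INR (Z p)))
    with (INR (Z w) * INR (Y p)) by (field; lra).
  lra.
Qed.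

Section GeneratingSequences.
Variable V : infword.

Lemma gen_seq_Z_lower (u : nat -> word) : gen_seq_of V u ->
  forall n, (S n <= Z (u n))%nat.
Proof.
  intros [[_ [H0 Hbuilt]] _] n. induction n.
  - rewrite H0. unfold Z. simpl. lia.
  - destruct (built_from_counts _ _ (Hbuilt n)). lia.
Qed.

Lemma gen_seq_made_of (u : nat -> word) : gen_seq_of V u ->
  forall k n, (k <= n)%nat -> made_of (u k) (u n).
Proof.
  intros [[_ [_ Hbuilt]] _] k n Hkn. induction Hkn.
  - apply made_of_refl.
  - eapply made_of_built_from; eauto.
Qed.

Lemma gen_seq_rho_growing (u : nat -> word) : gen_seq_of V u ->
  Un_growing (fun m => rho (u m)).
Proof.
  intros Hu n. pose proof (gen_seq_Z_lower u Hu n).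
  pose proof (gen_seq_Z_lower u Hu (S n)).
  destruct Hu as [[_ [_ Hbuilt]] _].
  destruct (built_from_counts _ _ (Hbuilt n)) as [_ Hcross].
  apply rho_le_cross; lia.
Qed.

(* Every u_n is a prefix of some w_m made of w_k, so the prefix bound
   compares u_n with w_k for any two generating sequences of V. *)
Lemma gen_seq_cross_bound (u w : nat -> word) :
  gen_seq_of V u -> gen_seq_of V w -> forall k n,
  (Y (w k) * Z (u n) <= Z (w k) * Y (u n) + Y (w k) * Z (w k))%nat.
Proof.
  intros Hu Hw k n.
  set (m := Nat.max k (length (u n))).
  assert (Hlen : (length (u n) <= length (w m))%nat).
  { pose proof (gen_seq_Z_lower w Hw m). pose proof (Z_le_length (w m)).
    unfold m in *. lia. }
  rewrite (prefix_of_prefix V (u n) (w m)) by (apply Hu || apply Hw || exact Hlen).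
  destruct (gen_seq_made_of w Hw k m) as [as_ ->]; [unfold m; lia|].
  apply prefix_made_of_bound.
Qed.

Lemma gen_seq_eventually_above (u w : nat -> word) :
  gen_seq_of V u -> gen_seq_of V w ->
  forall k eps, 0 < eps -> exists N, forall n, (N <= n)%nat ->
    rho (w k) - eps < rho (u n).
Proof.
  intros Hu Hw k eps Heps.
  destruct (INR_archimed eps (INR (Y (w k))) Heps) as [N HN].
  exists N. intros n Hn.
  pose proof (gen_seq_Z_lower u Hu n) as Hzu.
  pose proof (gen_seq_Z_lower w Hw k) as Hzw.
  assert (Hbound := rho_lower_bound (w k) (u n) ltac:(lia) ltac:(lia)
                      (gen_seq_cross_bound u w Hu Hw k n)).
  assert (Hz : 0 < INR (Z (u n))) by (apply lt_0_INR; lia).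
  assert (HNz : INR N <= INR (Z (u n))) by (apply le_INR; lia).
  assert (INR (Y (w k)) / INR (Z (u n)) < eps).
  { apply Rmult_lt_reg_r with (INR (Z (u n))); [exact Hz|].
    unfold Rdiv. rewrite Rmult_assoc, Rinv_l by lra. nra. }
  lra.
Qed.

End GeneratingSequences.

Lemma growing_le (a : nat -> R) : Un_growing a ->
  forall n m, (n <= m)%nat -> a n <= a m.
Proof. intros H n m Hnm. pose proof (growing_prop a m n H Hnm). lra. Qed.

Lemma growing_has_ext_limit (b : nat -> R) : Un_growing b -> (forall n, 0 <= b n) ->
  exists L, (forall l, L = Some l -> 0 <= l) /\ cv_ext b L.
Proof.
  intros Hg H0.
  destruct (classic (has_ub b)) as [Hbd|Hunbd].
  - destruct (growing_cv b Hg Hbd) as [l Hl]. exists (Some l). split; [|exact Hl].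
    intros l' E. injection E as <-.
    pose proof (growing_ineq b l Hg Hl 0%nat). specialize (H0 0%nat). lra.
  - exists None. split; [discriminate|]. intros M.
    apply NNPP. intros Hn. apply Hunbd. exists M. intros x [n ->].
    apply Rnot_lt_le. intros Hlt. apply Hn. exists n. intros m Hm.
    pose proof (growing_le b Hg n m Hm). lra.
Qed.

Lemma growing_same_ext_limit (a b : nat -> R) : Un_growing a -> Un_growing b ->
  (forall k eps, 0 < eps -> exists N, forall n, (N <= n)%nat -> b k - eps < a n) ->
  (forall k eps, 0 < eps -> exists N, forall n, (N <= n)%nat -> a k - eps < b n) ->
  forall L, cv_ext b L -> cv_ext a L.
Proof.
  intros Ga Gb Hab Hba [l|] Hb; simpl in *.
  - assert (Hle : forall n, a n <= l).
    { intros n. apply Rnot_lt_le. intros Hlt.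
      destruct (Hba n ((a n - l) / 2)) as [N HN]; [lra|].
      specialize (HN N (le_n N)). pose proof (growing_ineq b l Gb Hb N). lra. }
    intros eps Heps. destruct (Hb (eps / 2)) as [K HK]; [lra|].
    specialize (HK K (le_n K)). unfold R_dist in HK.
    destruct (Hab K (eps / 2)) as [N HN]; [lra|].
    exists N. intros n Hn. unfold R_dist. specialize (HN n Hn). specialize (Hle n).
    apply Rabs_def1; apply Rabs_def2 in HK; lra.
  - intros M. destruct (Hb (M + 1)) as [K HK]. specialize (HK K (le_n K)).
    destruct (Hab K 1) as [N HN]; [lra|]. exists N. intros n Hn.
    specialize (HN n Hn). lra.
Qed.

Theorem mainTheorem3 (V : infword) (HV : in_calR V) :
  (forall u : nat -> word, gen_seq_of V u ->
     Un_growing (fun m => rho (u m))) /\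
  (exists L : option R,
     (forall l, L = Some l -> 0 <= l) /\
     forall u : nat -> word, gen_seq_of V u ->
       cv_ext (fun m => rho (u m)) L).
Proof.
  destruct HV as [[v Hv] _]. split; [apply gen_seq_rho_growing|].
  destruct (growing_has_ext_limit (fun m => rho (v m))
              (gen_seq_rho_growing V v Hv) (fun m => rho_nonneg (v m)))
    as [L [HLnonneg HvL]].
  exists L. split; [exact HLnonneg|]. intros u Hu.
  apply (growing_same_ext_limit _ (fun m => rho (v m))).
  - exact (gen_seq_rho_growing V u Hu).
  - exact (gen_seq_rho_growing V v Hv).
  - exact (gen_seq_eventually_above V u v Hu Hv).
  - exact (gen_seq_eventually_above V v u Hv Hu).
  - exact HvL.
Qed.
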